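(* Let $(a_n)_{n\ge0}$ be given by $a_n=1$ if $n+1$ is a power of $2$ and $a_n=0$ otherwise. Let $m$ and $K\ge0$ be integers with $1\le 2^K<m\le 2^{K+1}$, and for $n\ge0$ let $d(n,m)=\det\left(a_{i+j+m}\right)_{i,j=0}^{n-1}$ (with $d(0,m)=1$). Then $d(n,m)\in\{1,-1\}$ if $n\equiv 0\pmod{2^{K+1}}$ or $n\equiv -m\pmod{2^{K+1}}$, and $d(n,m)=0$ otherwise. *)

From mathcomp Require Import all_boot all_algebra.
Set Implicit Arguments. Unset Strict Implicit. Unset Printing Implicit Defensive.
Import GRing.Theory.
Local Open Scope ring_scope.

(* a_n = 1 if n+1 is a power of 2 (2^k, k >= 0), 0 otherwise.  Powers of 2
   that could equal n+1 have exponent k <= n+1, hence k ranges over iota 0 n.+2. *)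
Definition is_pow2 (N : nat) : bool := has (fun k => 2 ^ k == N)%N (iota 0 N.+1).
Definition a_seq (n : nat) : int := if is_pow2 n.+1 then 1 else 0.

Definition hdet (n m : nat) : int := \det (\matrix_(i < n, j < n) a_seq (i + j + m)%N).

From mathcomp Require Import all_boot all_algebra fingroup perm zify.
Import GRing.Theory.

(* Expanding the determinant, only the permutations s of [0, n) for which
   every i + s i + m + 1 is a power of 2 contribute, so it suffices to show
   that such an s exists exactly under the congruence condition, and is then
   unique.  Let 2^k < n + m <= 2^(k+1) and r = 2^(k+1) - (n + m).  An index
   with i + m + 1 > 2^k can only reach the power 2^(k+1), since all sums stay
   below 2^(k+2); this forces s to reverse the block [r, n) and to restrict to
   a permutation of the same kind on [0, r), and conversely every such
   permutation of [0, r) extends.  As n + r + m = 2^(k+1) is a multiple of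
   2^(K+1), the congruence condition for n is the one for r, and under it
   r < n, so the descent n -> r ends at 0. *)

Lemma is_pow2P N : reflect (exists a, N = 2 ^ a) (is_pow2 N).
Proof.
apply: (iffP hasP) => [[a _ /eqP <-]|[a ->]]; first by exists a.
exists a => //; rewrite mem_iota add0n ltnS.
exact: ltnW (ltn_expl a (ltnSn 1)).
Qed.

Lemma pow2_squeeze k N : 2 ^ k < N < 2 ^ k.+2 -> is_pow2 N -> N = 2 ^ k.+1.
Proof.
move=> /andP[lb ub] /is_pow2P[a N_eq]; rewrite N_eq in lb ub *.
rewrite !ltn_exp2l // in lb ub.
by have -> : a = k.+1 by lia.
Qed.

Lemma pow2_bracket x : 1 < x -> exists k, 2 ^ k < x <= 2 ^ k.+1.
Proof.
move=> x_gt1; have := @trunc_log_bounds 2 x.-1 isT (_ : 0 < x.-1).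
by move=> /(_ ltac:(lia)); exists (trunc_log 2 x.-1); lia.
Qed.

Lemma dvdn_pow2_compl {K k} x y : K <= k -> x + y = 2 ^ k ->
  (2 ^ K %| x) = (2 ^ K %| y).
Proof. by move=> K_le xy; apply: dvdn_add_eq; rewrite xy dvdn_exp2l. Qed.

Lemma dvdn_leq_add {d x y} : d %| x -> d %| y -> x < y -> x + d <= y.
Proof.
move=> dx dy x_lt.
have : d <= y - x by apply: dvdn_leq; [lia | exact: dvdn_sub].
lia.
Qed.

Definition pow2_matching m n (g h : nat -> nat) := forall i, i < n ->
  [/\ g i < n, h i < n, h (g i) = i, g (h i) = i & is_pow2 (i + g i + m).+1].

Definition mirror_extend m n k (g : nat -> nat) i :=
  if i < 2 ^ k.+1 - (n + m) then g i else 2 ^ k.+1 - m.+1 - i.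

Definition admissible m K n := (2 ^ K.+1 %| n) || (2 ^ K.+1 %| n + m).

Section Matchings.

Context {m : nat}.

Lemma pow2_matching_sym {n g h} :
  pow2_matching m n g h -> pow2_matching m n h g.
Proof.
move=> gh i /gh[gi_lt hi_lt hgi ghi _]; split=> //.
by have [_ _ _ _ pow2_hi] := gh _ hi_lt; rewrite ghi [h i + i]addnC in pow2_hi.
Qed.

Section Fold.

Context {n k : nat}.
Hypotheses (lb_nm : 2 ^ k < n + m) (ub_nm : n + m <= 2 ^ k.+1).

Local Notation r := (2 ^ k.+1 - (n + m)).
Local Notation mirror i := (2 ^ k.+1 - m.+1 - i).

Lemma pow2_matching_high {g h} : pow2_matching m n g h ->
  forall i, i < n -> 2 ^ k < i + m.+1 -> i + g i + m.+1 = 2 ^ k.+1.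
Proof.
move=> gh i i_lt i_high; have [gi_lt _ _ _ pow2_i] := gh i i_lt.
rewrite addnS; apply: pow2_squeeze pow2_i; rewrite (expnS 2 k.+1); lia.
Qed.

(* For [i + m < 2 ^ k] the index [mirror i] is high, and its [h]-partner
   must then be [i]. *)
Lemma pow2_matching_tail {g h} : pow2_matching m n g h ->
  forall i, r <= i < n -> i + g i + m.+1 = 2 ^ k.+1.
Proof.
move=> gh i /andP[r_le i_lt].
have [i_high|i_low] := ltnP (2 ^ k) (i + m.+1).
  exact: pow2_matching_high gh i i_lt i_high.
have j_lt : mirror i < n by lia.
have j_high : 2 ^ k < mirror i + m.+1 by have := expnS 2 k; lia.
have := pow2_matching_high (pow2_matching_sym gh) _ j_lt j_high.
have [_ _ _ ghj _] := gh _ j_lt.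
move=> hj_eq; have hj : h (mirror i) = i by lia.
have gi : g i = mirror i by rewrite -{1}hj ghj.
lia.
Qed.

Lemma pow2_matching_tailE {g h} : pow2_matching m n g h ->
  forall i, r <= i < n -> g i = mirror i.
Proof. by move=> gh i /(pow2_matching_tail gh); lia. Qed.

Lemma pow2_matching_fold_lt {g h} : 0 < n -> pow2_matching m n g h -> r < n.
Proof.
move=> n_gt0 gh; have last_lt : n.-1 < n by rewrite ltn_predL.
have last_high : 2 ^ k < n.-1 + m.+1 by lia.
have [g_last_lt _ _ _ _] := gh _ last_lt.
by have := pow2_matching_high gh _ last_lt last_high; lia.
Qed.

Lemma pow2_matching_fold {g h} : 0 < n ->
  pow2_matching m n g h -> pow2_matching m r g h.
Proof.
move=> n_gt0 gh i i_lt_r; have r_lt := pow2_matching_fold_lt n_gt0 gh.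
have [gi_lt hi_lt hgi ghi pow2_i] := gh i (ltn_trans i_lt_r r_lt).
split=> //; rewrite ltnNge; apply/negP => r_le.
  have := pow2_matching_tail (pow2_matching_sym gh) (g i).
  by rewrite r_le gi_lt hgi => /(_ isT); lia.
have := pow2_matching_tail gh (h i).
by rewrite r_le hi_lt ghi => /(_ isT); lia.
Qed.

Lemma pow2_matching_mirror_extend g h : r <= n -> pow2_matching m r g h ->
  pow2_matching m n (mirror_extend m n k g) (mirror_extend m n k h).
Proof.
move=> r_le gh i i_lt; rewrite /mirror_extend.
have [i_lt_r|r_le_i] := ltnP i r.
  have [gi_lt hi_lt -> -> pow2_i] := gh i i_lt_r.
  by rewrite gi_lt hi_lt; split=> //; lia.
have -> : (mirror i < r) = false by lia.
have -> : mirror (mirror i) = i by lia.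
by split=> //; [lia | lia | apply/is_pow2P; exists k.+1; lia].
Qed.

End Fold.

Lemma pow2_matching_uniq {n g h g' h'} : 0 < m ->
  pow2_matching m n g h -> pow2_matching m n g' h' ->
  forall i, i < n -> g i = g' i.
Proof.
move=> m_gt0; elim/ltn_ind: n g h g' h' => [[|n] IH] g h g' h' gh gh' i //.
have [k /andP[lb ub]] := @pow2_bracket (n.+1 + m) ltac:(lia).
have [i_lt_r|r_le_i] := ltnP i (2 ^ k.+1 - (n.+1 + m)).
  have r_lt := pow2_matching_fold_lt lb ub (ltn0Sn n) gh.
  have fold := pow2_matching_fold lb ub (ltn0Sn n).
  by move=> _; apply: IH r_lt _ _ _ _ (fold _ _ gh) (fold _ _ gh') i i_lt_r.
move=> i_lt; rewrite (pow2_matching_tailE lb ub gh) ?r_le_i //.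
by rewrite (pow2_matching_tailE lb ub gh') ?r_le_i.
Qed.

End Matchings.

Lemma pow2_bracket_ge {K m n k} : 2 ^ K < m -> n + m <= 2 ^ k.+1 -> K <= k.
Proof. by move=> m_gt ub; rewrite -ltnS -(ltn_exp2l _ _ (ltnSn 1)); lia. Qed.

Lemma admissible_fold {m K n k} : K <= k -> n + m <= 2 ^ k.+1 ->
  admissible m K (2 ^ k.+1 - (n + m)) = admissible m K n.
Proof.
move=> K_le ub; rewrite /admissible orbC; set r := 2 ^ k.+1 - (n + m).
rewrite (@dvdn_pow2_compl K.+1 k.+1 (r + m) n) //; last by rewrite /r; lia.
by rewrite (@dvdn_pow2_compl K.+1 k.+1 r (n + m)) //; rewrite /r; lia.
Qed.

(* For [K < k], if [r >= n] then [n] or [r], whichever is a multiple of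
   [2 ^ K.+1], would lie strictly between [2 ^ k - 2 ^ K.+1] and [2 ^ k]. *)
Lemma admissible_fold_lt {m K n k} : 2 ^ K < m -> m <= 2 ^ K.+1 ->
  0 < n -> 2 ^ k < n + m -> n + m <= 2 ^ k.+1 ->
  admissible m K n -> 2 ^ k.+1 - (n + m) < n.
Proof.
move=> m_gt m_le n_gt0 lb ub adm; rewrite ltnNge; apply/negP => n_le.
have [K_lt|K_eq] : K < k \/ K = k by have := pow2_bracket_ge m_gt ub; lia.
  have M_dvd : 2 ^ K.+1 %| 2 ^ k by rewrite dvdn_exp2l.
  case/orP: adm => [M_dvd_n | M_dvd_nm].
    by have := dvdn_leq_add M_dvd_n M_dvd; have := expnS 2 k; lia.
  have M_dvd_r : 2 ^ K.+1 %| 2 ^ k.+1 - (n + m).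
    by rewrite -(@dvdn_pow2_compl K.+1 k.+1 (n + m)) //; lia.
  by have := dvdn_leq_add M_dvd_r M_dvd; have := expnS 2 k; lia.
by rewrite -K_eq in ub n_le; case/orP: adm => /dvdn_leq; lia.
Qed.

Lemma pow2_matching_admissible {m K n g h} : 2 ^ K < m ->
  pow2_matching m n g h -> admissible m K n.
Proof.
move=> m_gt; elim/ltn_ind: n g h => [[|n] IH] g h gh.
  by rewrite /admissible dvdn0.
have [k /andP[lb ub]] := @pow2_bracket (n.+1 + m) ltac:(lia).
rewrite -(admissible_fold (pow2_bracket_ge m_gt ub) ub).
have r_lt := pow2_matching_fold_lt lb ub (ltn0Sn n) gh.
exact: IH r_lt _ _ (pow2_matching_fold lb ub (ltn0Sn n) gh).
Qed.

Lemma admissible_pow2_matching {m K n} : 2 ^ K < m -> m <= 2 ^ K.+1 ->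
  admissible m K n -> exists g, pow2_matching m n g g.
Proof.
move=> m_gt m_le; elim/ltn_ind: n => [[|n] IH] adm; first by exists id.
have [k /andP[lb ub]] := @pow2_bracket (n.+1 + m) ltac:(lia).
have r_lt := admissible_fold_lt m_gt m_le (ltn0Sn n) lb ub adm.
have adm_r := etrans (admissible_fold (pow2_bracket_ge m_gt ub) ub) adm.
have [g gg] := IH _ r_lt adm_r.
exists (mirror_extend m n.+1 k g).
exact: pow2_matching_mirror_extend (ltnW r_lt) gg.
Qed.

Definition pow2_perm m {n} (s : 'S_n) :=
  [forall i : 'I_n, is_pow2 (i + s i + m).+1].

Definition nat_fun_of_perm {n} (s : 'S_n) (i : nat) : nat :=
  oapp (fun x : 'I_n => val (s x)) 0 (insub i).

Lemma nat_fun_of_permE n (s : 'S_n) (x : 'I_n) : nat_fun_of_perm s x = s x.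
Proof. by rewrite /nat_fun_of_perm valK. Qed.

Lemma pow2_perm_matching {m n} (s : 'S_n) : pow2_perm m s ->
  pow2_matching m n (nat_fun_of_perm s) (nat_fun_of_perm s^-1).
Proof.
move=> /forallP s_pow2 i i_lt; have -> : i = Ordinal i_lt by [].
by rewrite !nat_fun_of_permE permK permKV; split.
Qed.

Lemma pow2_matching_perm {m n g h} : pow2_matching m n g h ->
  exists s : 'S_n, pow2_perm m s.
Proof.
move=> gh; pose f (x : 'I_n) : 'I_n := insubd x (g x).
have fE x : val (f x) = g x.
  by rewrite val_insubd; have [-> _ _ _ _] := gh x (ltn_ord x).
have f_inj : injective f.
  move=> x y fxy; apply: val_inj.
  have [_ _ hgx _ _] := gh x (ltn_ord x).
  have [_ _ hgy _ _] := gh y (ltn_ord y).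
  by rewrite /= -hgx -hgy -!fE fxy.
exists (perm f_inj); apply/forallP => x; rewrite permE fE.
by have [_ _ _ _] := gh x (ltn_ord x).
Qed.

Lemma pow2_perm_uniq {m n} (s t : 'S_n) : 0 < m ->
  pow2_perm m s -> pow2_perm m t -> s = t.
Proof.
move=> m_gt0 /pow2_perm_matching st /pow2_perm_matching tt.
apply/permP => x; apply: val_inj.
have := pow2_matching_uniq m_gt0 st tt x (ltn_ord x).
by rewrite !nat_fun_of_permE.
Qed.

Local Open Scope ring_scope.

Lemma hdet_pow2_perm n m : hdet n m = \sum_(s : 'S_n | pow2_perm m s) (-1) ^+ s.
Proof.
rewrite /hdet /determinant (bigID (pow2_perm m)) /= [X in _ + X]big1 ?addr0.
  apply: eq_bigr => s /forallP s_pow2; rewrite big1 ?mulr1 // => i _.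
  by rewrite mxE /a_seq s_pow2.
move=> s /forallPn[i not_pow2].
by rewrite (bigD1 i) //= mxE /a_seq (negbTE not_pow2) mul0r mulr0.
Qed.

Theorem theorem3p1 (m K : nat) :
  (1 <= 2 ^ K < m)%N -> (m <= 2 ^ K.+1)%N ->
  forall n : nat,
    (((n %% 2 ^ K.+1 == 0)%N || ((n + m) %% 2 ^ K.+1 == 0)%N) ->
       hdet n m = 1 \/ hdet n m = -1) /\
    (~~ ((n %% 2 ^ K.+1 == 0)%N || ((n + m) %% 2 ^ K.+1 == 0)%N) ->
       hdet n m = 0).
Proof.
move=> /andP[_ m_gt] m_le n.
change ((n %% 2 ^ K.+1 == 0) || ((n + m) %% 2 ^ K.+1 == 0))%N
  with (admissible m K n).
have m_gt0 : (0 < m)%N by lia.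
split=> [adm | not_adm].
  have [g gg] := admissible_pow2_matching m_gt m_le adm.
  have [s s_pow2] := pow2_matching_perm gg.
  rewrite hdet_pow2_perm (bigD1 s) //= big1 ?addr0.
    by case: (odd_perm s); [right | left].
  by move=> t /andP[t_pow2 /eqP[]]; apply: pow2_perm_uniq m_gt0 t_pow2 s_pow2.
rewrite hdet_pow2_perm big1 // => s /pow2_perm_matching.
by move=> /(pow2_matching_admissible m_gt); rewrite (negbTE not_adm).
Qed.
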